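(* Let $(X,T)$ and $(Y,S)$ be ergodically supported topological dynamical systems with $T$ and $S$ invertible, and suppose $(X,T)$ and $(Y,S)$ are almost topologically conjugate. Then there exist a $T$-invariant set $\tilde X\subseteq X$ and an $S$-invariant set $\tilde Y\subseteq Y$, such that $\tilde X$ has full measure for every ergodically supported measure of $(X,T)$ and $\tilde Y$ has full measure for every ergodically supported measure of $(Y,S)$, and a homeomorphism $\varphi:\tilde X\to\tilde Y$ (subspace topologies) with $\varphi\circ T=S\circ\varphi$ on $\tilde X$; i.e. $\varphi$ is a topological conjugacy between $(\tilde X,T|_{\tilde X})$ and $(\tilde Y,S|_{\tilde Y})$.
   Context: A topological dynamical system $(X,T)$ is a compact metric space $X$ with a continuous surjection $T:X\to X$. A probability measure on $X$ is ergodically supported (for $(X,T)$) if it is $T$-invariant and ergodic and assigns positive measure to every nonempty open subset of $X$; $(X,T)$ is ergodically supported if such a measure exists. A set $E\subseteq X$ is universally null if $\mu(E)=0$ for every ergodically supported measure $\mu$. The inverse limit system of $(X,T)$ is $X^T:=\{(x_i)_{i\in\mathbb Z}\in X^{\mathbb Z}: x_{i+1}=T(x_i)\ \forall i\}$ with the standard compact metric (induced from the product topology) and the shift $\sigma_{X^T}((x_i)_i)=(x_{i+1})_i$. A Markov shift is a closed shift-invariant subset $\Lambda$ of $\mathcal A^{\mathbb Z}$ ($\mathcal A$ finite) given by bi-infinite walks on a finite directed graph, with the shift map $\sigma$. Two ergodically supported systems $(X,T)$, $(Y,S)$ are almost topologically conjugate if there exist an ergodically supported Markov shift $(\Lambda,\sigma)$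 and continuous surjections $f_T:\Lambda\to X^T$, $f_S:\Lambda\to Y^S$ such that (i) $\sigma_{X^T}\circ f_T=f_T\circ\sigma$ and $\sigma_{Y^S}\circ f_S=f_S\circ\sigma$; (ii) there are a $\sigma_{X^T}$-invariant universally null set $M_2\subset X^T$ and a $\sigma_{Y^S}$-invariant universally null set $P_2\subset Y^S$ such that $f_T:\Lambda\setminus M_1\to X^T\setminus M_2$ and $f_S:\Lambda\setminus P_1\to Y^S\setminus P_2$ are one-to-one, where $M_1=f_T^{-1}(M_2)$, $P_1=f_S^{-1}(P_2)$. *)

From HB Require Import structures.
From mathcomp Require Import all_boot all_order all_algebra.
From mathcomp Require Import all_classical all_reals all_analysis.
Set Implicit Arguments. Unset Strict Implicit. Unset Printing Implicit Defensive.
Import Order.TTheory GRing.Theory Num.Theory.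
Local Open Scope classical_set_scope.
Local Open Scope ring_scope.

Definition borel (T : ptopologicalType) := g_sigma_algebraType (@open T).

Definition pseq (X : ptopologicalType) : Type := {ptws int -> X}.
HB.instance Definition _ (X : ptopologicalType) :=
  Topological.copy (pseq X) {ptws int -> X}.
HB.instance Definition _ (X : ptopologicalType) := Pointed.copy (pseq X) (int -> X).

Definition dalph (A : pointedType) : Type := discrete_topology A.
HB.instance Definition _ (A : pointedType) :=
  Topological.copy (dalph A) (discrete_topology A).
HB.instance Definition _ (A : pointedType) := Pointed.copy (dalph A) A.

Definition shift (V : Type) (x : int -> V) : int -> V := fun i => x (i + 1).

(** Ergodically supported measure of the system (K, F|_K), where K is a
    (closed, F-invariant) subset of the ambient space T: a Borel probability
    measure on T concentrated on K (i.e. a Borel probability measure on K),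
    F-invariant, ergodic, and giving positive mass to every nonempty
    relatively open subset of K. *)
Definition erg_supp_on (R : realType) (T : ptopologicalType) (K : set T)
    (F : T -> T) (mu : probability (borel T) R) : Prop :=
  [/\ mu K = 1%E,
      (forall A : set (borel T), measurable A ->
          mu (F @^-1` A `&` K) = mu (A `&` K)),
      (forall A : set (borel T), measurable A -> A `<=` K ->
          F @^-1` A `&` K = A -> mu A = 0%E \/ mu A = 1%E)
    & (forall U : set T, open U -> U `&` K !=set0 -> (0 < mu (U `&` K))%E)].

Definition erg_supp_measure (R : realType) (T : ptopologicalType) (F : T -> T)
    (mu : probability (borel T) R) : Prop := erg_supp_on setT F mu.

Definition erg_supp_system (R : realType) (T : ptopologicalType) (K : set T)
    (F : T -> T) : Prop :=
  exists mu : probability (borel T) R, erg_supp_on K F mu.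

Definition universally_null (R : realType) (T : ptopologicalType) (K : set T)
    (F : T -> T) (E : set T) : Prop :=
  measurable (E : set (borel T)) /\
  forall mu : probability (borel T) R, erg_supp_on K F mu -> mu E = 0%E.

Definition invariant_in (T : Type) (K : set T) (F : T -> T) (E : set T) : Prop :=
  E `<=` K /\ F @^-1` E `&` K = E.

Definition inv_lim (X : ptopologicalType) (T : X -> X) : set (pseq X) :=
  [set x | forall i : int, x (i + 1) = T (x i)].

Definition markov_shift (A : pointedType) (G : A -> A -> bool) :
    set (pseq (dalph A)) :=
  [set x | forall i : int, G (x i) (x (i + 1))].

(** Topological dynamical system: compact metric space, continuous surjection.
    (A pseudometric Hausdorff space is a metric space.) *)
Definition tds (R : realType) (X : pseudoPMetricType R) (T : X -> X) : Prop :=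
  [/\ hausdorff_space X, compact [set: X], continuous T & forall y, exists x, T x = y].

Definition almost_conj_map (R : realType) (A : pointedType)
    (Lam : set (pseq (dalph A)))
    (X : ptopologicalType) (T : X -> X)
    (f : pseq (dalph A) -> pseq X) : Prop :=
  [/\ {within Lam, continuous f},
      f @` Lam = inv_lim T,
      (forall x, Lam x -> f (shift x) = shift (f x))
    & exists M2 : set (pseq X),
        [/\ invariant_in (inv_lim T) (@shift X) M2,
            universally_null R (inv_lim T) (@shift X) M2
          & set_inj (Lam `\` (f @^-1` M2)) f]].

Definition almost_top_conj (R : realType) (X Y : ptopologicalType)
    (T : X -> X) (S : Y -> Y) : Prop :=
  exists (A : pointedType) (G : A -> A -> bool),
    finite_set [set: A] /\
    let Lam := markov_shift G in
    erg_supp_system R Lam (@shift (dalph A)) /\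
    exists (fT : pseq (dalph A) -> pseq X)
           (fS : pseq (dalph A) -> pseq Y),
      almost_conj_map R Lam T fT /\ almost_conj_map R Lam S fS.

From Pilot Require Import Defs.
From HB Require Import structures.
From mathcomp Require Import all_boot all_order all_algebra.
From mathcomp Require Import all_classical all_reals all_analysis.
From mathcomp Require Import zify.
Import Order.TTheory GRing.Theory Num.Theory.
Set Implicit Arguments. Unset Strict Implicit. Unset Printing Implicit Defensive.
Local Open Scope classical_set_scope.
Local Open Scope ring_scope.

(* Both systems are coded by the same Markov shift [Lam].  Since [T] is
   invertible, the orbit map identifies [X] with its inverse limit [X^T]; off
   the invariant universally null set [M], the factor map [Lam -> X^T] is a
   continuous injection on a compact set, hence has a continuous inverse.  This
   codes a [T]-invariant set of points of [X] by points of [Lam], and [l] is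
   decoded as [f l 0].  Pushing ergodically supported measures forward along
   these maps keeps them ergodically supported, so all exceptional sets are
   null.  The conjugacy codes in [Lam] and decodes in [Y], restricted to the
   points whose code is also good for [Y]. *)

Lemma within_continuousP {U V : topologicalType} (D : set U) (f : U -> V) :
  {within D, continuous f} <->
  (forall W, open W -> exists2 Q, open Q & f @^-1` W `&` D = Q `&` D).
Proof.
rewrite continuousP; split=> cf W oW.
  by have [Q oQ eQ] := (open_subspaceP _ _).1 (cf W oW); exists Q.
by apply/open_subspaceP; have [Q oQ eQ] := cf W oW; exists Q.
Qed.

Lemma within_continuous_closedP {U V : topologicalType} (D : set U) (f : U -> V) :
  {within D, continuous f} <->
  (forall W, closed W -> exists2 Q, closed Q & f @^-1` W `&` D = Q `&` D).
Proof.
rewrite continuous_closedP; split=> cf W cW.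
  by have [Q cQ eQ] := (closed_subspaceP _ _).1 (cf W cW); exists Q.
by apply/closed_subspaceP; have [Q cQ eQ] := cf W cW; exists Q.
Qed.

(* [g] pulls closed sets back to compact, hence closed, images under [f]. *)
Lemma compact_inverse_continuous {U V : topologicalType} (A : set U) (D : set V)
    (f : U -> V) (g : V -> U) :
  hausdorff_space V -> compact A -> closed A -> {within A, continuous f} ->
  (forall y, D y -> A (g y) /\ f (g y) = y) ->
  (forall a, A a -> D (f a) -> g (f a) = a) ->
  {within D, continuous g}.
Proof.
move=> hV cA clA cf gD gf; apply/within_continuous_closedP => C cC.
exists (f @` (C `&` A)).
  apply: compact_closed => //; apply: continuous_compact.
    by apply: continuous_subspaceW cf => x [].
  by apply: (subclosed_compact _ cA); [exact: closedI | move=> x []].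
apply/seteqP; split=> y [].
  by move=> Cgy Dy; have [Agy fgy] := gD y Dy; split=> //; exists (g y).
by move=> [a [Ca Aa] <-] Dfa; split=> //=; rewrite gf.
Qed.

Lemma within_continuous_compS {U V W : topologicalType} (A : set U) (B : set V)
    (f : U -> V) (g : V -> W) :
  {within A, continuous f} -> f @` A `<=` B -> {within B, continuous g} ->
  {within A, continuous (g \o f)}.
Proof.
move=> /within_continuousP cf fAB /within_continuousP cg.
apply/within_continuousP => Z oZ.
have [Q oQ eQ] := cg Z oZ; have [Q' oQ' eQ'] := cf Q oQ.
exists Q' => //; rewrite -eQ'; apply/seteqP; split=> x [/= gfx Ax]; split=> //.
  by have [] : (Q `&` B) (f x) by rewrite -eQ; split=> //; apply: fAB; exists x.
by have [] : (g @^-1` Z `&` B) (f x) by rewrite eQ; split=> //; apply: fAB; exists x.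
Qed.

Lemma pseq_continuous {W : topologicalType} {X : ptopologicalType} (g : W -> pseq X) :
  (forall i, continuous (fun w => g w i)) -> continuous g.
Proof.
move=> cg w; apply/cvg_sup => i A /=; rewrite nbhsE => -[B [[C oC eC] Bgw] BA].
have : nbhs (g w i) C by apply: open_nbhs_nbhs; split=> //; rewrite -eC in Bgw.
move=> /(cg i w) /=; rewrite nbhsE => -[N [oN Nw] NC].
exists N; first by split.
by move=> x /NC Cx; apply: BA; rewrite -eC.
Qed.

Lemma proj_continuous_pseq {X : ptopologicalType} (i : int) :
  continuous (fun w : pseq X => w i).
Proof. exact: (@proj_continuous int (fun=> X) i). Qed.

Lemma shift_continuous {X : ptopologicalType} :
  continuous (@Defs.shift X : pseq X -> pseq X).
Proof. by apply: pseq_continuous => i; exact: proj_continuous_pseq. Qed.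

Section markov_shift.
Context {A : pointedType} (G : A -> A -> bool).

Lemma markov_shift_closed : closed (markov_shift G).
Proof.
move=> z cz i.
have open_coord j (a : dalph A) : open [set w : pseq (dalph A) | w j = a].
  apply: ((continuousP _).1 (@proj_continuous_pseq (dalph A) j) [set a]).
  exact: (@discrete_open (discrete_topology A)).
pose N := [set w : pseq (dalph A) | w i = z i] `&` [set w | w (i + 1) = z (i + 1)].
have oN : open N by apply: openI; apply: open_coord.
have [w [Lw [wi wi1]]] : markov_shift G `&` N !=set0.
  by apply: cz; apply: open_nbhs_nbhs; split.
by have := Lw i; rewrite wi wi1.
Qed.

Lemma markov_shift_compact : finite_set [set: A] -> compact (markov_shift G).
Proof.
move=> finA; apply: (@subclosed_compact _ _ setT markov_shift_closed) => //.
have := @tychonoff int (fun=> dalph A) (fun=> setT)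
  (fun=> @finite_compact (dalph A) setT finA).
by move=> h; apply: (subclosed_compact _ h).
Qed.

Lemma markov_shift_shift z : markov_shift G z -> markov_shift G (Defs.shift z).
Proof. by move=> Lz i; apply: Lz. Qed.

End markov_shift.

Section borel_measurability.
Context {U V : ptopologicalType}.

Lemma open_measurable_borel (W : set U) : open W -> measurable (W : set (borel U)).
Proof. exact: sub_sigma_algebra. Qed.

Lemma closed_measurable_borel (W : set U) : closed W -> measurable (W : set (borel U)).
Proof.
move=> cW; rewrite -[W]setCK; apply: measurableC.
by apply: open_measurable_borel; exact: closed_openC.
Qed.

Lemma within_continuous_measurable (D : set U) (f : U -> V) :
  measurable (D : set (borel U)) -> {within D, continuous f} ->
  measurable_fun (D : set (borel U)) (f : borel U -> borel V).
Proof.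
move=> mD /within_continuousP cf.
apply: (@measurability _ _ (borel U) (borel V) D _ (@open V)) => //.
move=> _ [W oW <-]; have [Q oQ eQ] := cf W oW.
by rewrite setIC eQ; apply: measurableI => //; exact: open_measurable_borel.
Qed.

Lemma continuous_measurable_borel (f : U -> V) :
  continuous f -> measurable_fun [set: borel U] (f : borel U -> borel V).
Proof.
by move=> cf; apply: within_continuous_measurable => //; exact: continuous_subspaceT.
Qed.

End borel_measurability.

Lemma markov_shift_measurable {A : pointedType} (G : A -> A -> bool) :
  measurable (markov_shift G : set (borel (pseq (dalph A)))).
Proof. by apply: closed_measurable_borel; exact: markov_shift_closed. Qed.

Section probability_lemmas.
Context {R : realType} {U V : ptopologicalType}.
Implicit Types mu : probability (borel U) R.

Lemma measure_setI_full mu (D A : set (borel U)) :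
  measurable D -> mu D = 1%E -> measurable A -> mu (A `&` D) = mu A.
Proof.
move=> mD muD mA.
have mDC : measurable (~` D) by exact: measurableC.
have muDC : mu (~` D) = 0%E by rewrite probability_setC // muD subee.
rewrite -[in RHS](setIT A) -(setUv D) setIUr measureU //; last 3 first.
- exact: measurableI.
- exact: measurableI.
- by rewrite setIACA setICr !setI0.
rewrite -[LHS]adde0; congr (_ + _); apply/esym/eqP.
rewrite -measure_le0 -muDC; apply: le_measure; rewrite ?inE //.
exact: measurableI.
Qed.

Lemma measure_setI_setC_null mu (D N : set (borel U)) :
  measurable D -> measurable N -> mu D = 1%E -> mu N = 0%E -> mu (D `&` ~` N) = 1%E.
Proof.
move=> mD mN muD muN.
by rewrite setIC measure_setI_full ?probability_setC ?muN ?sube0 //; exact: measurableC.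
Qed.

Lemma pushforward_within mu (D : set U) (f : U -> V) :
  measurable (D : set (borel U)) -> mu D = 1%E -> {within D, continuous f} ->
  exists rho : probability (borel V) R,
    forall B, measurable (B : set (borel V)) -> rho B = mu (D `&` f @^-1` B).
Proof.
move=> mD muD cf.
have /(measurable_restrictT _ mD) mf := within_continuous_measurable mD cf.
have mfP : (f \_ D : borel U -> borel V) \in mfun by rewrite inE.
exists (distribution mu (mfun_Sub mfP)) => B mB.
have mfB : measurable ((f \_ D) @^-1` B : set (borel U)).
  by rewrite -[_ @^-1` _]setTI; exact: mf.
transitivity (mu ((f \_ D) @^-1` B `&` D)); first exact/esym/measure_setI_full.
congr (mu _).
by apply/seteqP; split=> x; [case=> + Dx | case=> Dx];
  rewrite /preimage /= patchE (mem_set Dx).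
Qed.

End probability_lemmas.

Section ergodically_supported.
Context {R : realType}.

Lemma erg_supp_on_invariant {U : ptopologicalType} (F : U -> U) (D : set U)
    (mu : probability (borel U) R) :
  erg_supp_measure F mu -> measurable (D : set (borel U)) -> F @^-1` D = D ->
  mu D = 1%E -> erg_supp_on D F mu.
Proof.
move=> [_ minv merg mpos] mD FD muD.
have muI (A : set (borel U)) : measurable A -> mu (A `&` D) = mu A.
  exact: measure_setI_full.
split=> // [A mA|A mA AD|W oW WD].
- rewrite -[in LHS]FD -preimage_setI.
  by have := minv _ (measurableI _ _ mA mD); rewrite !setIT.
- rewrite -[in X in X -> _]FD -preimage_setI (setIidl AD) => FA.
  by apply: merg => //; rewrite setIT.
- rewrite muI; last exact: open_measurable_borel.
  by rewrite -[W]setIT; apply: mpos => //; case: WD => x [Wx _]; exists x.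
Qed.

Lemma erg_supp_pushforward {U V : ptopologicalType} (Lam : set U) (K : set V)
    (F : U -> U) (G : V -> V) (f : U -> V) (kappa : probability (borel U) R) :
  measurable (Lam : set (borel U)) -> measurable (K : set (borel V)) ->
  measurable_fun [set: borel V] (G : borel V -> borel V) ->
  {within Lam, continuous f} ->
  (forall x, Lam x -> [/\ K (f x), Lam (F x) & f (F x) = G (f x)]) ->
  (forall W, open W -> W `&` K !=set0 -> exists2 x, Lam x & W (f x)) ->
  erg_supp_on Lam F kappa ->
  exists rho : probability (borel V) R, erg_supp_on K G rho /\
    forall B, measurable (B : set (borel V)) -> rho B = kappa (Lam `&` f @^-1` B).
Proof.
move=> mL mK mG cf fLK fdense [kL kinv kerg kpos].
have [rho rhoE] := pushforward_within mL kL cf.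
have mpre B : measurable (B : set (borel V)) ->
    measurable (Lam `&` f @^-1` B : set (borel U)).
  by move=> mB; apply: (within_continuous_measurable mL cf).
have preK (B : set (borel V)) : Lam `&` f @^-1` (B `&` K) = Lam `&` f @^-1` B.
  apply/seteqP; split=> x [Lx]; first by case.
  by move=> fB; split=> //; split=> //; case: (fLK x Lx).
have preG (B : set (borel V)) :
   Lam `&` f @^-1` (G @^-1` B `&` K) = F @^-1` (Lam `&` f @^-1` B) `&` Lam.
  apply/seteqP; split=> x.
    by move=> [Lx [GB _]]; have [_ LFx efF] := fLK x Lx; rewrite /preimage /= efF.
  move=> [[LFx fFB] Lx]; have [Kfx _ efF] := fLK x Lx.
  by split=> //; split=> //; rewrite /preimage /= -efF.
exists rho; split; last exact: rhoE.
split.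
- rewrite rhoE // (_ : _ `&` _ = Lam) //.
  by apply/seteqP; split=> [x []//|x Lx]; split=> //; case: (fLK x Lx).
- move=> B mB; have mGB : measurable (G @^-1` B `&` K : set (borel V)).
    by apply: measurableI => //; rewrite -[_ @^-1` _]setTI; exact: mG.
  rewrite !rhoE //; last exact: measurableI.
  rewrite preG kinv; last exact: mpre.
  by rewrite setIAC setIid; congr (kappa _); exact/esym/preK.
- move=> B mB BK GB; rewrite rhoE //.
  by apply: kerg; [exact: mpre | move=> x [] | rewrite -preG GB].
- move=> W oW /(fdense W oW) [x Lx Wfx].
  have [Q oQ eQ] := (within_continuousP _ _).1 cf W oW.
  rewrite rhoE; last by apply: measurableI => //; exact: open_measurable_borel.
  rewrite preK setIC eQ; apply: kpos => //.
  by exists x; rewrite -eQ.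
Qed.

End ergodically_supported.

(* [Negz n] is the integer [-(n + 1)]. *)
Definition orbit_seq {X : Type} (T Ti : X -> X) (x : X) : int -> X :=
  fun i => match i with Posz n => iter n T x | Negz n => iter n.+1 Ti x end.

Section orbit_sequence.
Context {X : Type} (T Ti : X -> X).
Hypotheses (TK : cancel T Ti) (TiK : cancel Ti T).

Lemma orbit_seq_step x i : orbit_seq T Ti x (i + 1) = T (orbit_seq T Ti x i).
Proof.
case: i => [n|[|n]].
- by rewrite (_ : n%:Z + 1 = n.+1%:Z) //; lia.
- by rewrite (_ : Negz 0 + 1 = 0) //= TiK.
- by rewrite (_ : Negz n.+1 + 1 = Negz n) /= ?TiK // !NegzE; lia.
Qed.

Lemma trajectory_eq (z w : int -> X) :
  (forall i, z (i + 1) = T (z i)) -> (forall i, w (i + 1) = T (w i)) ->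
  z 0 = w 0 -> z = w.
Proof.
move=> zT wT zw0; apply: funext => -[n|n].
- elim: n => [//|n IH].
  by rewrite (_ : n.+1%:Z = n%:Z + 1) ?zT ?wT ?IH //; lia.
- elim: n => [|n IH]; apply: (can_inj TK); first by rewrite -zT -wT.
  by rewrite -zT -wT (_ : Negz n.+1 + 1 = Negz n) //; rewrite !NegzE; lia.
Qed.

Lemma orbit_seqE (z : int -> X) :
  (forall i, z (i + 1) = T (z i)) -> orbit_seq T Ti (z 0) = z.
Proof. by move=> zT; apply: trajectory_eq => //; exact: orbit_seq_step. Qed.

Lemma orbit_seqT x : orbit_seq T Ti (T x) = Defs.shift (orbit_seq T Ti x).
Proof.
by apply: trajectory_eq => [i|i|]; rewrite /Defs.shift ?orbit_seq_step.
Qed.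

End orbit_sequence.

(* [h] codes the points of the full-measure set [D] by points of [Lam] outside
   the null set [N] of bad codes, and [p] decodes. *)
Record coding (R : realType) (A : pointedType) (Lam : set (pseq (dalph A)))
    (X : ptopologicalType) (T : X -> X) (D : set X) (N : set (pseq (dalph A)))
    (h : X -> pseq (dalph A)) (p : pseq (dalph A) -> X) : Prop := Coding {
  coding_measurable : measurable (D : set (borel X));
  coding_full : forall mu : probability (borel X) R,
    erg_supp_measure T mu -> mu D = 1%E;
  coding_invariant : T @^-1` D = D;
  coding_code_continuous : {within D, continuous h};
  coding_code_good : forall x, D x -> Lam (h x) /\ ~ N (h x);
  coding_code_shift : forall x, D x -> h (T x) = Defs.shift (h x);
  coding_decode_continuous : {within Lam, continuous p};
  coding_decode_shift : forall l, Lam l -> p (Defs.shift l) = T (p l);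
  coding_codeK : forall x, D x -> p (h x) = x;
  coding_decodeK : forall l, Lam l -> ~ N l -> D (p l) /\ h (p l) = l;
  coding_bad_shift : forall l, Lam l -> N (Defs.shift l) <-> N l;
  coding_bad_measurable : measurable (N : set (borel (pseq (dalph A))));
  coding_bad_null : forall kappa : probability (borel (pseq (dalph A))) R,
    erg_supp_on Lam (@Defs.shift (dalph A)) kappa -> kappa N = 0%E;
  coding_pullback : forall mu : probability (borel X) R, erg_supp_measure T mu ->
    exists2 nu : probability (borel (pseq (dalph A))) R,
      erg_supp_on Lam (@Defs.shift (dalph A)) nu &
      forall B, measurable B -> nu B = mu (D `&` h @^-1` B) }.

Section coding_of_factor.
Context {R : realType} {A : pointedType} (G : A -> A -> bool).
Context {X : ptopologicalType} (T Ti : X -> X).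
Context (f : pseq (dalph A) -> pseq X) (M : set (pseq X)).

Local Notation Lam := (markov_shift G).
Local Notation orbit := (orbit_seq T Ti).
Local Notation shiftA := (@Defs.shift (dalph A)).
Local Notation shiftX := (@Defs.shift X).

Hypotheses (finA : finite_set [set: A])
  (Lam_erg : erg_supp_system R Lam shiftA)
  (TK : cancel T Ti) (TiK : cancel Ti T) (hausX : hausdorff_space X).
Hypotheses (f_cont : {within Lam, continuous f})
  (f_onto : f @` Lam = inv_lim T)
  (f_shift : forall l, Lam l -> f (shiftA l) = shiftX (f l))
  (M_inv : invariant_in (inv_lim T) shiftX M)
  (M_null : universally_null R (inv_lim T) shiftX M)
  (f_inj : set_inj (Lam `\` f @^-1` M) f).

Definition factor_inv (z : pseq X) : pseq (dalph A) :=
  xget point [set l | Lam l /\ ~ M (f l) /\ f l = z].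

Definition codable : set X := [set x | ~ M (orbit x)].
Definition bad_codes : set (pseq (dalph A)) := Lam `&` f @^-1` M.
Definition code : X -> pseq (dalph A) := factor_inv \o orbit.
Definition decode (l : pseq (dalph A)) : X := f l 0.

Lemma hausdorff_pseq : hausdorff_space (pseq X).
Proof. exact: (@hausdorff_product int (fun=> X)). Qed.

Lemma inv_lim_compact : compact (inv_lim T).
Proof.
by rewrite -f_onto; apply: continuous_compact => //; exact: markov_shift_compact.
Qed.

Lemma inv_lim_closed : closed (inv_lim T).
Proof. exact: compact_closed hausdorff_pseq inv_lim_compact. Qed.

Lemma orbit_inv_lim x : inv_lim T (orbit x).
Proof. by move=> i; rewrite orbit_seq_step. Qed.

(* The orbit map is the inverse of the continuous injection [z |-> z 0] on the
   compact set [inv_lim T]. *)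
Lemma orbit_continuous : continuous (orbit : X -> pseq X).
Proof.
apply/continuous_subspace_setT.
apply: (@compact_inverse_continuous _ _ (inv_lim T) setT (fun w => w 0)) => //.
- exact: inv_lim_compact.
- exact: inv_lim_closed.
- exact/continuous_subspaceT/proj_continuous_pseq.
- by move=> x _; split; [exact: orbit_inv_lim|].
- by move=> z zT _; exact: orbit_seqE.
Qed.

Lemma M_shift z : inv_lim T z -> M (shiftX z) <-> M z.
Proof.
case: M_inv => _ MT zT.
split=> [Msz|Mz]; first by rewrite -MT; split.
by move: Mz; rewrite -{1}MT => -[].
Qed.

Lemma factor_invP z :
  inv_lim T z -> ~ M z -> Lam (factor_inv z) /\ f (factor_inv z) = z.
Proof.
move=> zT Mz; rewrite /factor_inv.
have : exists l, Lam l /\ ~ M (f l) /\ f l = z.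
  by move: zT; rewrite -f_onto => -[l Ll fl]; exists l; rewrite fl.
by move=> /(xgetPex point) [? [_ ?]].
Qed.

Lemma factor_invK l : Lam l -> ~ M (f l) -> factor_inv (f l) = l.
Proof.
move=> Ll Mfl; have fT : inv_lim T (f l) by rewrite -f_onto; exists l.
have [Ldl fdl] := factor_invP fT Mfl.
by apply: f_inj; rewrite ?inE //; split=> //; rewrite /preimage /= fdl.
Qed.

Lemma factor_inv_continuous : {within inv_lim T `\` M, continuous factor_inv}.
Proof.
apply: (@compact_inverse_continuous _ _ Lam _ f) => //.
- exact: hausdorff_pseq.
- exact: markov_shift_compact.
- exact: markov_shift_closed.
- by move=> z [zT Mz]; exact: factor_invP.
- by move=> l Ll [_ Mfl]; exact: factor_invK.
Qed.

Lemma codable_invariant : T @^-1` codable = codable.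
Proof.
apply/seteqP; split=> x; rewrite /codable /preimage /= (orbit_seqT TK TiK).
- by move=> nMs Mx; apply: nMs; apply/(M_shift (orbit_inv_lim x)).
- by move=> nM /(M_shift (orbit_inv_lim x)).
Qed.

Lemma orbit_preimage_measurable : measurable (orbit @^-1` M : set (borel X)).
Proof.
case: M_null => mM _; rewrite -[_ @^-1` _]setTI.
exact: (continuous_measurable_borel orbit_continuous).
Qed.

Lemma codable_measurable : measurable (codable : set (borel X)).
Proof. by apply: measurableC; exact: orbit_preimage_measurable. Qed.

Lemma code_good x : codable x -> Lam (code x) /\ ~ bad_codes (code x).
Proof.
move=> cx; have [Ld fd] := factor_invP (orbit_inv_lim x) cx.
by split=> // -[_]; rewrite /preimage /= fd.
Qed.

Lemma code_shift x : codable x -> code (T x) = shiftA (code x).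
Proof.
move=> cx; rewrite /code /= (orbit_seqT TK TiK).
have [Ld fd] := factor_invP (orbit_inv_lim x) cx.
move: Ld fd; set l := factor_inv (orbit x) => Ll fl.
rewrite -fl -f_shift //; apply: factor_invK; first exact: markov_shift_shift.
by rewrite f_shift // fl => /(M_shift (orbit_inv_lim x)).
Qed.

Lemma code_continuous : {within codable, continuous code}.
Proof.
apply: (within_continuous_compS (B := inv_lim T `\` M)).
- exact/continuous_subspaceT/orbit_continuous.
- by move=> _ [x cx <-]; split=> //; exact: orbit_inv_lim.
- exact: factor_inv_continuous.
Qed.

Lemma decode_continuous : {within Lam, continuous decode}.
Proof.
apply: (@within_continuous_comp _ _ _ Lam f (fun w => w 0)) => // z _.
exact: proj_continuous_pseq.
Qed.

Lemma decode_shift l : Lam l -> decode (shiftA l) = T (decode l).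
Proof.
move=> Ll; have fT : inv_lim T (f l) by rewrite -f_onto; exists l.
by rewrite /decode f_shift //; exact: fT.
Qed.

Lemma codeK x : codable x -> decode (code x) = x.
Proof.
by move=> cx; have [_ fd] := factor_invP (orbit_inv_lim x) cx; rewrite /decode /= fd.
Qed.

Lemma decodeK l :
  Lam l -> ~ bad_codes l -> codable (decode l) /\ code (decode l) = l.
Proof.
move=> Ll bl; have fT : inv_lim T (f l) by rewrite -f_onto; exists l.
have Mfl : ~ M (f l) by move=> Mfl; apply: bl.
rewrite /codable /code /decode /= (orbit_seqE TK TiK fT).
by split=> //; exact: factor_invK.
Qed.

Lemma bad_codes_shift l : Lam l -> bad_codes (shiftA l) <-> bad_codes l.
Proof.
move=> Ll; have fT : inv_lim T (f l) by rewrite -f_onto; exists l.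
rewrite /bad_codes /preimage /= f_shift //.
split=> -[_ Mf]; first by split=> //; apply/(M_shift fT).
by split; [exact: markov_shift_shift | apply/(M_shift fT)].
Qed.

Lemma bad_codes_measurable :
  measurable (bad_codes : set (borel (pseq (dalph A)))).
Proof.
case: M_null => mM _; have mL := markov_shift_measurable G.
exact: (within_continuous_measurable mL f_cont mL mM).
Qed.

Lemma codable_full (mu : probability (borel X) R) :
  erg_supp_measure T mu -> mu codable = 1%E.
Proof.
move=> emu; case: M_null => mM Mnull.
have orbit_dense W :
    open W -> W `&` inv_lim T !=set0 -> exists2 x, setT x & W (orbit x).
  by move=> _ [z [Wz zT]]; exists (z 0); rewrite // (orbit_seqE TK TiK zT).
have [rho [erho rhoE]] := erg_supp_pushforward measurableT
  (closed_measurable_borel inv_lim_closed) (continuous_measurable_borel shift_continuous)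
  (continuous_subspaceT orbit_continuous)
  (fun x _ => And3 (orbit_inv_lim x) I (orbit_seqT TK TiK x)) orbit_dense emu.
rewrite /codable (_ : [set x | _] = ~` (orbit @^-1` M)) //.
rewrite probability_setC; last exact: orbit_preimage_measurable.
by rewrite -[orbit @^-1` M]setTI -rhoE // Mnull // sube0.
Qed.

Lemma bad_codes_null (kappa : probability (borel (pseq (dalph A))) R) :
  erg_supp_on Lam shiftA kappa -> kappa bad_codes = 0%E.
Proof.
move=> ek; case: M_null => mM Mnull.
have f_dense W : open W -> W `&` inv_lim T !=set0 -> exists2 l, Lam l & W (f l).
  by move=> _ [z [Wz]]; rewrite -f_onto => -[l Ll fl]; exists l; rewrite ?fl.
have f_in l :
    Lam l -> [/\ inv_lim T (f l), Lam (shiftA l) & f (shiftA l) = shiftX (f l)].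
  move=> Ll; split; [by rewrite -f_onto; exists l | exact: markov_shift_shift |].
  exact: f_shift.
have [rho [erho rhoE]] := erg_supp_pushforward
  (markov_shift_measurable G) (closed_measurable_borel inv_lim_closed)
  (continuous_measurable_borel shift_continuous) f_cont f_in f_dense ek.
by rewrite /bad_codes -rhoE // Mnull.
Qed.

Lemma code_dense W :
  open W -> W `&` Lam !=set0 -> exists2 x, codable x & W (code x).
Proof.
move=> oW WL; have [kappa ek] := Lam_erg.
have [[l [Wl Ll Mfl]]|none] := pselect (exists l, [/\ W l, Lam l & ~ M (f l)]).
  have [gl cl] := decodeK Ll (fun b => Mfl b.2).
  by exists (decode l); rewrite ?cl.
have : (kappa (W `&` Lam) <= kappa bad_codes)%E.
  apply: le_measure; rewrite ?inE.
  - apply: measurableI; [exact: open_measurable_borel | exact: markov_shift_measurable].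
  - exact: bad_codes_measurable.
  - by move=> l [Wl Ll]; split=> //; apply: contrapT => Mfl; apply: none; exists l.
have kappa_pos : (0 < kappa (W `&` Lam))%E by case: ek => _ _ _; apply.
by move=> /(lt_le_trans kappa_pos); rewrite bad_codes_null // ltxx.
Qed.

Lemma code_pullback (mu : probability (borel X) R) : erg_supp_measure T mu ->
  exists2 nu : probability (borel (pseq (dalph A))) R, erg_supp_on Lam shiftA nu &
    forall B, measurable B -> nu B = mu (codable `&` code @^-1` B).
Proof.
move=> emu.
have ecodable := erg_supp_on_invariant emu codable_measurable codable_invariant
  (codable_full emu).
have code_in x :
    codable x -> [/\ Lam (code x), codable (T x) & code (T x) = shiftA (code x)].
  move=> cx; split; [exact: (code_good cx).1 | by rewrite -codable_invariant in cx |].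
  exact: code_shift.
have [nu [enu nuE]] := erg_supp_pushforward codable_measurable
  (markov_shift_measurable G) (continuous_measurable_borel shift_continuous)
  code_continuous code_in code_dense ecodable.
by exists nu.
Qed.

Lemma coding_of_factor : coding R Lam T codable bad_codes code decode.
Proof.
exact: (Coding codable_measurable codable_full codable_invariant code_continuous
  code_good code_shift decode_continuous decode_shift codeK decodeK bad_codes_shift
  bad_codes_measurable bad_codes_null code_pullback).
Qed.

End coding_of_factor.

Lemma almost_conj_map_coding (R : realType) (A : pointedType) (G : A -> A -> bool)
    (X : ptopologicalType) (T : X -> X) (f : pseq (dalph A) -> pseq X) :
  finite_set [set: A] -> erg_supp_system R (markov_shift G) (@Defs.shift (dalph A)) ->
  hausdorff_space X -> bijective T -> almost_conj_map R (markov_shift G) T f ->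
  exists D N h p, coding R (markov_shift G) T D N h p.
Proof.
move=> finA Lam_erg hausX [Ti TK TiK] [f_cont f_onto f_shift [M [M_inv M_null f_inj]]].
by do 4 eexists; exact: (coding_of_factor finA Lam_erg TK TiK hausX f_cont f_onto
  f_shift M_inv M_null f_inj).
Qed.

Section conjugacy_of_codings.
Context {R : realType} {A : pointedType} (Lam : set (pseq (dalph A))).
Context {X Y : ptopologicalType} (T : X -> X) (S : Y -> Y).
Context (DX : set X) (NX : set (pseq (dalph A))).
Context (hX : X -> pseq (dalph A)) (pX : pseq (dalph A) -> X).
Context (DY : set Y) (NY : set (pseq (dalph A))).
Context (hY : Y -> pseq (dalph A)) (pY : pseq (dalph A) -> Y).
Hypotheses (cX : coding R Lam T DX NX hX pX) (cY : coding R Lam S DY NY hY pY).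

Definition conj_domain : set X := [set x | DX x /\ ~ NY (hX x)].
Definition conj_map : X -> Y := pY \o hX.

Lemma conj_domainE : conj_domain = DX `&` ~` (DX `&` hX @^-1` NY).
Proof.
apply/seteqP; split=> x [Dx nN]; split=> //; first by case.
by move=> NhX; apply: nN.
Qed.

Lemma conj_domain_invariant : T @^-1` conj_domain = conj_domain.
Proof.
have DT x : DX (T x) = DX x by rewrite -{2}(coding_invariant cX).
have NT x : DX x -> NY (hX (T x)) <-> NY (hX x).
  move=> Dx; rewrite (coding_code_shift cX Dx).
  exact/(coding_bad_shift cY)/(coding_code_good cX Dx).1.
apply/seteqP; split=> x; rewrite /conj_domain /preimage /= DT => -[Dx nN]; split=> //.
  by move=> /(NT x Dx).2.
by move=> /(NT x Dx).1.
Qed.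

Lemma bad_preimage_measurable : measurable (DX `&` hX @^-1` NY : set (borel X)).
Proof.
have mD := coding_measurable cX.
exact: (within_continuous_measurable mD (coding_code_continuous cX) mD
  (coding_bad_measurable cY)).
Qed.

Lemma conj_domain_measurable : measurable (conj_domain : set (borel X)).
Proof.
rewrite conj_domainE; apply: measurableI; first exact: coding_measurable cX.
by apply: measurableC; exact: bad_preimage_measurable.
Qed.

(* Pulling [mu] back to [Lam] turns the null set [NY] of codes into a null
   set of points. *)
Lemma conj_domain_full (mu : probability (borel X) R) :
  erg_supp_measure T mu -> mu conj_domain = 1%E.
Proof.
move=> emu; have [nu enu nuE] := coding_pullback cX emu.
rewrite conj_domainE; apply: measure_setI_setC_null.
- exact: coding_measurable cX.
- exact: bad_preimage_measurable.
- exact: (coding_full cX).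
- rewrite -nuE; last exact: (coding_bad_measurable cY).
  exact: (coding_bad_null cY).
Qed.

Lemma conj_map_continuous : {within conj_domain, continuous conj_map}.
Proof.
apply: (within_continuous_compS (B := Lam)).
- by apply: continuous_subspaceW (coding_code_continuous cX) => x [].
- by move=> _ [x [Dx _] <-]; exact: (coding_code_good cX Dx).1.
- exact: coding_decode_continuous cY.
Qed.

Lemma conj_mapK x : conj_domain x ->
  (DY (conj_map x) /\ ~ NX (hY (conj_map x))) /\ pX (hY (conj_map x)) = x.
Proof.
move=> [Dx nNY]; have [Ll nNX] := coding_code_good cX Dx.
have [Dy hyE] := coding_decodeK cY Ll nNY.
by rewrite /conj_domain /conj_map /= hyE (coding_codeK cX Dx).
Qed.

Lemma conj_map_shift x : conj_domain x -> conj_map (T x) = S (conj_map x).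
Proof.
move=> [Dx _]; rewrite /conj_map /= (coding_code_shift cX Dx).
exact/(coding_decode_shift cY)/(coding_code_good cX Dx).1.
Qed.

End conjugacy_of_codings.

Theorem theorem3p2 (R : realType) (X Y : pseudoPMetricType R)
    (T : X -> X) (S : Y -> Y) :
  tds T -> tds S -> bijective T -> bijective S ->
  erg_supp_system R setT T -> erg_supp_system R setT S ->
  almost_top_conj R T S ->
  exists (Xt : set X) (Yt : set Y) (phi : X -> Y) (phi_inv : Y -> X),
    [/\ T @^-1` Xt = Xt /\ S @^-1` Yt = Yt,
        (measurable (Xt : set (borel X)) /\
          (forall mu : probability (borel X) R,
              erg_supp_measure T mu -> mu Xt = 1%E)),
        (measurable (Yt : set (borel Y)) /\
          (forall mu : probability (borel Y) R,
              erg_supp_measure S mu -> mu Yt = 1%E)),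
        [/\ {within Xt, continuous phi}, {within Yt, continuous phi_inv},
            (forall x, Xt x -> Yt (phi x) /\ phi_inv (phi x) = x)
          & (forall y, Yt y -> Xt (phi_inv y) /\ phi (phi_inv y) = y)]
      & forall x, Xt x -> phi (T x) = S (phi x)].
Proof.
move=> [hausX _ _ _] [hausY _ _ _] bijT bijS _ _.
move=> [A [G [finA /= [Lam_erg [fT [fS [fTc fSc]]]]]]].
have [DX [NX [hX [pX cX]]]] := almost_conj_map_coding finA Lam_erg hausX bijT fTc.
have [DY [NY [hY [pY cY]]]] := almost_conj_map_coding finA Lam_erg hausY bijS fSc.
exists (conj_domain DX hX NY), (conj_domain DY hY NX), (conj_map hX pY), (conj_map hY pX).
split.
- split; [exact: conj_domain_invariant cX cY | exact: conj_domain_invariant cY cX].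
- by split; [exact: conj_domain_measurable cX cY | exact: conj_domain_full cX cY].
- by split; [exact: conj_domain_measurable cY cX | exact: conj_domain_full cY cX].
- split; [exact: conj_map_continuous cX cY | exact: conj_map_continuous cY cX |
    exact: conj_mapK cX cY | exact: conj_mapK cY cX].
- exact: conj_map_shift cX cY.
Qed.
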